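(* Let $\Omega$ be a finite-dimensional real Euclidean space and $f_1,\dots,f_N\colon\Omega\to\mathbb{R}$ convex, each $\mu$-strongly convex and $L$-smooth ($\mu,L>0$), $\kappa=L/\mu$. Run DualFL (described in the context) with $\rho\in[0,\nu/L]$ and $\nu\in(0,\mu]$, where the local iterates are required to satisfy, for some $\gamma>0$, $\Gamma^{n,j}(\theta_j^{(n+1)})\le\frac1N\left(\frac{1-\sqrt\rho}{1+\gamma}\right)^n$ for all $j,n$. Suppose each local problem is solved by an optimal first-order algorithm of iteration complexity $\mathcal{O}(\sqrt\kappa\log(1/\epsilon))$ (i.e. the number of iterations needed to reach primal-dual gap at most $\epsilon$ is $\mathcal{O}(\sqrt\kappa\log(1/\epsilon))$). Then the number $M_n$ of inner iterations at the $n$-th epoch satisfies \[ M_n=\mathcal{O}\left(\sqrt\kappa\left(\log\big(N(1+\gamma)^n\big)+n\sqrt\rho\right)\right)=\mathcal{O}\left(\sqrt\kappa\log\frac{N(1+\gamma)^n}{\epsilon_{\mathrm{out}}}\right), \] where $\epsilon_{\mathrm{out}}>0$ is the target accuracy of the outer iterations (so that the number of outer iterations is $\mathcal{O}((1/\sqrt\rho)\log(1/\epsilon_{\mathrm{out}}))$). In particular, letting $\gamma\to0^+$, $M_n=\mathcal{O}\left(\sqrt\kappa\log\frac{N}{\epsilon_{\mathrm{out}}}\right)$.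
   Context: $h$ is $\mu$-strongly convex if $h-\frac\mu2\|\cdot\|^2$ is convex; $L$-smooth means differentiable with $L$-Lipschitz gradient; $h^*$ is the Legendre--Fenchel conjugate. DualFL with hyperparameters $\rho\ge0$, $\nu>0$: set $\theta^{(0)}=\theta_j^{(0)}=0$, $\zeta_j^{(0)}=\zeta_j^{(-1)}=0$, $t_0=1$. For $n=0,1,\dots$: each client $j$ runs $M_n$ iterations of a local solver to get an approximate minimizer $\theta_j^{(n+1)}$ of $E^{n,j}(\theta)=f_j(\theta)-\nu\langle\zeta_j^{(n)},\theta\rangle$; $\theta^{(n+1)}=\frac1N\sum_j\theta_j^{(n+1)}$; $t_{n+1}=\frac{1-\rho t_n^2+\sqrt{(1-\rho t_n^2)^2+4t_n^2}}{2}$, $\beta_n=\frac{t_n-1}{t_{n+1}}\cdot\frac{1-t_{n+1}\rho}{1-\rho}$; $\zeta_j^{(n+1)}=(1+\beta_n)(\zeta_j^{(n)}+\theta^{(n+1)}-\theta_j^{(n+1)})-\beta_n(\zeta_j^{(n-1)}+\theta^{(n)}-\theta_j^{(n)})$. Primal-dual gap: $g_j=f_j-\frac\nu2\|\cdot\|^2$, $E^{n,j}_{\mathrm d}(\xi)=g_j^*(\xi)+\frac1{2\nu}\|\xi-\nu\zeta_j^{(n)}\|^2$, $\Gamma^{n,j}(\theta)=E^{n,j}(\theta)+E^{n,j}_{\mathrm d}(\nu(\zeta_j^{(n)}-\theta))$.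
   Formalization: ρ ≤ r for a fixed r < 1, with the constants in the O-bounds depending on r; Mₙ is the least inner-iteration count meeting every client's gap requirement, and the γ → 0⁺ bound is omitted. Apart from conventions, each condition added here is assumed in the paper as well or is needed for the statement above to hold. *)

From HB Require Import structures.
From mathcomp Require Import all_boot all_order all_algebra.
From mathcomp Require Import all_classical all_reals all_analysis.
Set Implicit Arguments. Unset Strict Implicit. Unset Printing Implicit Defensive.
Import Order.TTheory GRing.Theory Num.Theory.
Import numFieldNormedType.Exports.
Local Open Scope ring_scope.

Section DualFLDefs.
Variables (R : realType) (d : nat).
Local Notation V := 'rV[R]_d.

Definition dfl_dot (u v : V) : R := \sum_(i < d) u 0 i * v 0 i.
Definition dfl_norm (v : V) : R := Num.sqrt (dfl_dot v v).

Definition dfl_convex (h : V -> R) : Prop :=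
  forall (x y : V) (t : R), 0 <= t <= 1 ->
    h (t *: x + (1 - t) *: y) <= t * h x + (1 - t) * h y.

Definition dfl_strongly_convex (mu : R) (h : V -> R) : Prop :=
  dfl_convex (fun x => h x - mu / 2 * dfl_norm x ^+ 2).

Definition dfl_smooth (L : R) (h : V -> R) : Prop :=
  exists grad : V -> V,
    (forall x, differentiable h x /\ forall v, 'd h x v = dfl_dot (grad x) v) /\
    (forall x y, dfl_norm (grad x - grad y) <= L * dfl_norm (x - y)).

Definition dfl_conj (h : V -> R) (xi : V) : \bar R :=
  ereal_sup [set ((dfl_dot xi th - h th)%:E) | th in [set: V]].

Definition dfl_E (nu : R) (h : V -> R) (zeta th : V) : R :=
  h th - nu * dfl_dot zeta th.

Definition dfl_g (nu : R) (h : V -> R) (th : V) : R :=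
  h th - nu / 2 * dfl_norm th ^+ 2.

Definition dfl_Ed (nu : R) (h : V -> R) (zeta xi : V) : \bar R :=
  (dfl_conj (dfl_g nu h) xi + (1 / (2 * nu) * dfl_norm (xi - nu *: zeta) ^+ 2)%:E)%E.

Definition dfl_gap (nu : R) (h : V -> R) (zeta th : V) : \bar R :=
  ((dfl_E nu h zeta th)%:E + dfl_Ed nu h zeta (nu *: (zeta - th)))%E.

Definition dfl_beta (rho : R) (t : nat -> R) (n : nat) : R :=
  (t n - 1) / t n.+1 * ((1 - t n.+1 * rho) / (1 - rho)).

Definition dfl_zprev (N : nat) (zeta : nat -> 'I_N -> V) (n : nat) (j : 'I_N) : V :=
  if n is n'.+1 then zeta n' j else 0.

(* A run of DualFL.  solver j zeta th0 k is the k-th iterate of client j's local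
   solver applied to E^{n,j} (determined by f_j, nu and zeta), started from th0
   (warm start th0 = theta_j^(n)).  M n is the number of inner iterations at
   epoch n: the least number of iterations after which every client satisfies
   the gap requirement Gamma^{n,j}(theta_j^(n+1)) <= target n. *)
Record dualfl_run (N : nat) (f : 'I_N -> V -> R) (nu rho : R)
    (target : nat -> R) (solver : 'I_N -> V -> V -> nat -> V)
    (theta : nat -> V) (thj : nat -> 'I_N -> V) (zeta : nat -> 'I_N -> V)
    (t : nat -> R) (M : nat -> nat) : Prop := {
  dfl_theta0 : theta 0 = 0;
  dfl_thj0 : forall j, thj 0 j = 0;
  dfl_zeta0 : forall j, zeta 0 j = 0;
  dfl_t0 : t 0 = 1;
  dfl_tS : forall n, t n.+1 =
    (1 - rho * t n ^+ 2 + Num.sqrt ((1 - rho * t n ^+ 2) ^+ 2 + 4 * t n ^+ 2)) / 2;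
  dfl_local : forall n j, thj n.+1 j = solver j (zeta n j) (thj n j) (M n);
  dfl_avg : forall n, theta n.+1 = N%:R^-1 *: \sum_(j < N) thj n.+1 j;
  dfl_zetaS : forall n j, zeta n.+1 j =
    (1 + dfl_beta rho t n) *: (zeta n j + theta n.+1 - thj n.+1 j)
    - dfl_beta rho t n *: (dfl_zprev zeta n j + theta n - thj n j);
  dfl_gap_ok : forall n j,
    (dfl_gap nu (f j) (zeta n j) (thj n.+1 j) <= (target n)%:E)%E;
  dfl_M_min : forall n m, (m < M n)%N -> exists j,
    ((target n)%:E < dfl_gap nu (f j) (zeta n j) (solver j (zeta n j) (thj n j) m))%E
}.

End DualFLDefs.

(* The stopping rule makes M_n the least k after which every client's gap is below
   eps_n = N^-1 ((1 - sqrt rho) / (1 + gamma))^n, so the solver's complexity gives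
   M_n <= C sqrt(kappa) (1 + ln (1 / eps_n)) + 1.  The extra iteration is absorbed
   because kappa >= 1: adding the first-order inequalities of strong convexity at two
   points and comparing with the Lipschitz gradient forces mu <= L.  Finally
   ln (1 / eps_n) = ln (N (1 + gamma)^n) + n ln (1 / (1 - sqrt rho)), and
   ln (1 / (1 - sqrt rho)) <= sqrt rho / (1 - sqrt r) whenever rho <= r < 1. *)
From HB Require Import structures.
From mathcomp Require Import all_boot all_order all_algebra.
From mathcomp Require Import all_classical all_reals all_analysis.
From mathcomp Require Import ring lra.
Set Implicit Arguments. Unset Strict Implicit. Unset Printing Implicit Defensive.
Import Order.TTheory GRing.Theory Num.Theory.
Import numFieldNormedType.Exports.
Local Open Scope ring_scope.
Local Open Scope classical_set_scope.

Section EuclideanSpace.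
Variables (R : realType) (d : nat).
Local Notation V := 'rV[R]_d.

Lemma dfl_dotC (u v : V) : dfl_dot u v = dfl_dot v u.
Proof. by apply: eq_bigr => i _; rewrite mulrC. Qed.

Lemma dfl_dotNr (u v : V) : dfl_dot u (- v) = - dfl_dot u v.
Proof. by rewrite /dfl_dot -sumrN; apply: eq_bigr => i _; rewrite mxE mulrN. Qed.

Lemma dfl_dotNl (u v : V) : dfl_dot (- u) v = - dfl_dot u v.
Proof. by rewrite dfl_dotC dfl_dotNr dfl_dotC. Qed.

Lemma dfl_dotBl (u v w : V) : dfl_dot (u - v) w = dfl_dot u w - dfl_dot v w.
Proof. by rewrite /dfl_dot -sumrB; apply: eq_bigr => i _; rewrite !mxE mulrBl. Qed.

Lemma dfl_dot_ge0 (u : V) : 0 <= dfl_dot u u.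
Proof. by apply: sumr_ge0 => i _; rewrite -expr2 sqr_ge0. Qed.

Lemma dfl_norm_sqr (u : V) : dfl_norm u ^+ 2 = dfl_dot u u.
Proof. by rewrite sqr_sqrtr // dfl_dot_ge0. Qed.

Lemma dfl_dot_sqrZD (t : R) (w x : V) :
  dfl_dot (t *: w + x) (t *: w + x) =
  t ^+ 2 * dfl_dot w w + 2 * t * dfl_dot x w + dfl_dot x x.
Proof.
rewrite /dfl_dot !mulr_sumr -!big_split /=; apply: eq_bigr => i _.
by rewrite !mxE; ring.
Qed.

Lemma dfl_dot_delta (i : 'I_d) (u : V) : dfl_dot u (delta_mx 0 i) = u 0 i.
Proof.
rewrite /dfl_dot (bigD1 i) //= big1 ?addr0 => [|k /negbTE ki].
  by rewrite mxE !eqxx mulr1.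
by rewrite mxE ki andbF mulr0.
Qed.

Lemma dfl_coord_le_norm (i : 'I_d) (u : V) : `|u 0 i| <= dfl_norm u.
Proof.
rewrite /dfl_norm -sqrtr_sqr ler_sqrt ?dfl_dot_ge0 // /dfl_dot (bigD1 i) //=.
by rewrite -expr2 lerDl; apply: sumr_ge0 => k _; rewrite -expr2 sqr_ge0.
Qed.

Lemma dfl_dot_dim0 (u v : V) : d = 0%N -> dfl_dot u v = 0.
Proof. by move=> d0; apply: big1 => i _; move: (ltn_ord i); rewrite {2}d0. Qed.

Lemma dfl_gap_dim0 (nu : R) (f : V -> R) (z th : V) :
  d = 0%N -> dfl_gap nu f z th = 0%:E.
Proof.
move=> d0; have V0 (v : V) : v = 0.
  by apply/matrixP => i j; move: (ltn_ord j); rewrite {2}d0.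
rewrite /dfl_gap /dfl_Ed /dfl_conj /dfl_E /dfl_g /dfl_norm !dfl_dot_dim0 //.
rewrite (_ : [set _ | th in _] = [set (- f 0)%:E]); last first.
  apply/seteqP; split => [_ [v _ <-] | _ ->] /=.
    by rewrite !dfl_dot_dim0 // sqrtr0 expr0n /= mulr0 subr0 sub0r (V0 v).
  by exists 0 => //; rewrite !dfl_dot_dim0 // sqrtr0 expr0n /= mulr0 subr0 sub0r.
by rewrite ereal_sup1 sqrtr0 (V0 th) -!EFinD; congr (_%:E); ring.
Qed.

Section StronglyConvex.
Variables (mu : R) (f : V -> R).
Hypothesis f_sc : dfl_strongly_convex mu f.

Lemma strongly_convex_slope_le (x w : V) (t : R) : 0 < t <= 1 ->
  t^-1 * (f (t *: w + x) - f x) <=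
    f (w + x) - f x - (1 - t) * (mu / 2 * dfl_dot w w).
Proof.
move=> /andP[t_gt0 t_le1].
have := @f_sc (w + x) x t; rewrite (ltW t_gt0) t_le1 => /(_ isT).
have -> : t *: (w + x) + (1 - t) *: x = t *: w + x.
  by rewrite scalerDr scalerBl scale1r -addrA [t *: x + _]addrC subrK.
rewrite !dfl_norm_sqr dfl_dot_sqrZD.
have := dfl_dot_sqrZD 1 w x; rewrite scale1r => ->.
by rewrite ler_pdivrMl // => convex_t; nra.
Qed.

Lemma strongly_convex_diff_le (x w : V) : differentiable f x ->
  'd f x w + mu / 2 * dfl_dot w w <= f (w + x) - f x.
Proof.
move=> df; set c := mu / 2 * dfl_dot w w.
rewrite -lerBrDr -deriveE //.
pose quot t := t^-1 *: ((f \o shift x) (t *: w) - f x).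
have quot_cvg : quot t @[t --> 0^'] --> 'D_w f x by exact: diff_derivable.
have quot_cvg_right : quot t @[t --> 0^'+] --> 'D_w f x.
  move=> A /quot_cvg /nbhs_ballP [_ /posnumP[e] eA].
  by exists e%:num => //= y xey /gt_eqF/negbT/eA; exact.
have tc_cvg : t * c @[t --> 0^'+] --> 0 * c.
  by apply: cvg_at_right_filter; apply: cvgM; [exact: cvg_id | exact: cvg_cst].
have slope_cvg : quot t - t * c @[t --> 0^'+] --> 'D_w f x.
  by have := cvgB quot_cvg_right tc_cvg; rewrite mul0r subr0; exact.
rewrite -(cvg_lim _ slope_cvg) //; apply: limr_le; first by apply/cvg_ex; exists ('D_w f x).
near=> t; rewrite /quot /=.
change (t^-1 * (f (t *: w + x) - f x) - t * c <= f (w + x) - f x - c).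
have := @strongly_convex_slope_le x w t; rewrite -/c => slope_le.
suff /slope_le : 0 < t <= 1 by lra.
apply/andP; split; near: t; [exact: nbhs_right_gt | exact: nbhs_right_le].
Unshelve. all: by end_near.
Qed.

Lemma strongly_convex_smooth_le (L : R) : (0 < d)%N -> dfl_smooth L f -> mu <= L.
Proof.
move=> d_gt0 [grad [grad_diff grad_lip]].
pose i : 'I_d := Ordinal d_gt0; pose e : V := delta_mx 0 i.
have ee : dfl_dot e e = 1 by rewrite dfl_dot_delta mxE !eqxx.
have from0 := @strongly_convex_diff_le 0 e (proj1 (grad_diff 0)).
have frome := @strongly_convex_diff_le e (- e) (proj1 (grad_diff e)).
rewrite (proj2 (grad_diff 0)) addr0 ee in from0.
rewrite (proj2 (grad_diff e)) addNr dfl_dotNl !dfl_dotNr opprK ee in frome.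
have : mu <= dfl_dot (grad e - grad 0) e by rewrite dfl_dotBl; lra.
move/le_trans; apply; rewrite dfl_dot_delta.
apply: le_trans (ler_norm _) _; apply: le_trans (dfl_coord_le_norm i _) _.
by apply: le_trans (grad_lip e 0) _; rewrite subr0 /dfl_norm ee sqrtr1 mulr1.
Qed.

End StronglyConvex.
End EuclideanSpace.

Lemma dualfl_M_le_of_gap_le (R : realType) (d N : nat) (f : 'I_N -> 'rV[R]_d -> R) (nu rho : R)
    (target : nat -> R) (solver : 'I_N -> 'rV[R]_d -> 'rV[R]_d -> nat -> 'rV[R]_d)
    (theta : nat -> 'rV[R]_d) (thj zeta : nat -> 'I_N -> 'rV[R]_d) (t : nat -> R)
    (M : nat -> nat) (n k : nat) :
  dualfl_run f nu rho target solver theta thj zeta t M ->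
  (forall j z th0, (dfl_gap nu (f j) z (solver j z th0 k) <= (target n)%:E)%E) ->
  (M n <= k)%N.
Proof.
move=> run solver_ok; rewrite leqNgt; apply/negP => /(dfl_M_min run) [j].
by rewrite ltNge solver_ok.
Qed.

Section LogarithmicBounds.
Variable R : realType.

Lemma ln_invr_1B_le (x : R) : 0 <= x < 1 -> ln (1 - x)^-1 <= x / (1 - x).
Proof.
move=> /andP[x_ge0 x_lt1]; have x1_gt0 : 0 < 1 - x by rewrite subr_gt0.
rewrite [ln _](_ : _ = ln (1 + x / (1 - x))); last by congr ln; field; rewrite gt_eqF.
by apply: le_ln1Dx; apply: lt_le_trans (divr_ge0 x_ge0 (ltW x1_gt0)); rewrite ltrN10.
Qed.

Lemma geometric_target_in01 (N n : nat) (s g : R) :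
  (0 < N)%N -> 0 <= s < 1 -> 1 <= g ->
  0 < N%:R^-1 * ((1 - s) / g) ^+ n <= 1.
Proof.
move=> N_gt0 /andP[s_ge0 s_lt1] g_ge1; have g_gt0 := lt_le_trans ltr01 g_ge1.
have q_gt0 : 0 < (1 - s) / g by rewrite divr_gt0 ?subr_gt0.
rewrite mulr_gt0 ?invr_gt0 ?ltr0n ?exprn_gt0 //=.
apply: mulr_ile1; rewrite ?invr_ge0 ?ler0n ?exprn_ge0 ?(ltW q_gt0) ?invf_le1 ?ler1n ?ltr0n //.
apply: exprn_ile1; first exact: ltW.
by rewrite ler_pdivrMr // mul1r (le_trans _ g_ge1) // gerBl.
Qed.

Lemma ln_inv_geometric_target_le (N n : nat) (s s0 g : R) :
  (0 < N)%N -> 0 <= s <= s0 -> s0 < 1 -> 1 <= g ->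
  1 + ln (1 / (N%:R^-1 * ((1 - s) / g) ^+ n)) <=
    (1 - s0)^-1 * (1 + ln (N%:R * g ^+ n) + n%:R * s).
Proof.
move=> N_gt0 /andP[s_ge0 s_le_s0] s0_lt1 g_ge1.
have s_lt1 := le_lt_trans s_le_s0 s0_lt1; have g_gt0 := lt_le_trans ltr01 g_ge1.
have -> : 1 / (N%:R^-1 * ((1 - s) / g) ^+ n) = N%:R * g ^+ n * ((1 - s)^-1) ^+ n.
  rewrite expr_div_n exprVn; field.
  by rewrite !expf_neq0 ?pnatr_eq0 -?lt0n ?gt_eqF // subr_gt0.
rewrite lnM ?posrE ?mulr_gt0 ?exprn_gt0 ?ltr0n ?invr_gt0 ?subr_gt0 // lnXn ?invr_gt0 ?subr_gt0 //.
set c := (1 - s0)^-1; set A := ln (N%:R * g ^+ n).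
have A_ge0 : 0 <= A by rewrite ln_ge0 // mulr_ege1 ?ler1n // exprn_ege1.
have c_ge1 : 1 <= c by rewrite invf_ge1 ?subr_gt0 // gerBl (le_trans s_ge0).
have rate : ln (1 - s)^-1 <= c * s.
  apply: (le_trans (ln_invr_1B_le _)); first by rewrite s_ge0.
  rewrite mulrC; apply: ler_wpM2r => //.
  by rewrite lef_pV2 ?posrE ?subr_gt0 // lerD2l lerN2.
have : ln (1 - s)^-1 *+ n <= c * (n%:R * s).
  by rewrite mulrCA mulr_natl lerMn2r rate orbT.
have : 0 <= (c - 1) * (1 + A) by rewrite mulr_ge0 ?subr_ge0 ?addr_ge0.
by clear; lra.
Qed.

Lemma ln_add_le_ln_div (X e K x : R) : 1 <= X -> 0 < e <= 1 -> 0 <= K ->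
  x <= K * ln (1 / e) -> 1 + ln X + x <= (1 + K) * (1 + ln (X / e)).
Proof.
move=> X_ge1 /andP[e_gt0 e_le1] K_ge0 x_le.
have ln_inv_e_ge0 : 0 <= ln (1 / e) by rewrite ln_ge0 // ler_pdivlMr // mul1r.
have -> : ln (X / e) = ln X + ln (1 / e).
  by rewrite !ln_div ?posrE ?(lt_le_trans ltr01 X_ge1) // ln1 sub0r.
have : 0 <= K * (1 + ln X) by rewrite mulr_ge0 // addr_ge0 // ln_ge0.
by move: x_le ln_inv_e_ge0; clear; lra.
Qed.

End LogarithmicBounds.

Section InnerIterations.
Variables (R : realType) (d N : nat) (f : 'I_N -> 'rV[R]_d -> R) (mu L nu rho C : R).
Variables (target : nat -> R) (solver : 'I_N -> 'rV[R]_d -> 'rV[R]_d -> nat -> 'rV[R]_d).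
Variables (theta : nat -> 'rV[R]_d) (thj zeta : nat -> 'I_N -> 'rV[R]_d).
Variables (t : nat -> R) (M : nat -> nat).
Hypotheses (N_gt0 : (0 < N)%N) (mu_gt0 : 0 < mu) (C_ge0 : 0 <= C).
Hypotheses (f_sc : forall j, dfl_strongly_convex mu (f j))
  (f_smooth : forall j, dfl_smooth L (f j)).
Hypothesis solver_ok : forall j (z th0 : 'rV[R]_d) (eps : R), 0 < eps <= 1 ->
  forall k : nat, C * Num.sqrt (L / mu) * (1 + ln (1 / eps)) <= k%:R ->
  (dfl_gap nu (f j) z (solver j z th0 k) <= eps%:E)%E.
Hypothesis run : dualfl_run f nu rho target solver theta thj zeta t M.

Lemma sqrt_kappa_ge1 : (0 < d)%N -> 1 <= Num.sqrt (L / mu).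
Proof.
move=> d_gt0; have mu_le_L := strongly_convex_smooth_le (f_sc (Ordinal N_gt0)) d_gt0
  (f_smooth (Ordinal N_gt0)).
have L_gt0 : 0 < L := lt_le_trans mu_gt0 mu_le_L.
by rewrite -sqrtr1 ler_sqrt ?ler_pdivlMr ?mul1r // mul0r ltW.
Qed.

Lemma dualfl_M_le_ln_inv_target (n : nat) : 0 < target n <= 1 ->
  (M n)%:R <= (C + 1) * Num.sqrt (L / mu) * (1 + ln (1 / target n)).
Proof.
move=> eps01; have /andP[eps_gt0 eps_le1] := eps01.
set s := Num.sqrt (L / mu); set ell := ln (1 / target n).
have ell_ge0 : 0 <= ell by rewrite ln_ge0 // ler_pdivlMr // mul1r.
(* in dimension 0 nothing forces mu <= L, but then every gap vanishes *)
have [d0 | d_gt0] := posnP d.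
  have -> : M n = 0%N.
    apply/eqP; rewrite -leqn0; apply: (dualfl_M_le_of_gap_le run) => j z th0.
    by rewrite dfl_gap_dim0 // lee_fin ltW.
  by rewrite !mulr_ge0 ?sqrtr_ge0 ?addr_ge0.
set x := C * s * (1 + ell).
have M_le : (M n <= (Num.truncn x).+1)%N.
  by apply: (dualfl_M_le_of_gap_le run) => j z th0; apply: solver_ok => //; exact/ltW/truncnS_gt.
have s_ell_ge1 : 1 <= s * (1 + ell) by rewrite mulr_ege1 ?sqrt_kappa_ge1 ?lerDl.
apply: (@le_trans _ _ (x + 1)).
  rewrite -(ler_nat R) in M_le; apply: le_trans M_le _.
  by rewrite -addn1 natrD lerD2r truncn_le !mulr_ge0 ?sqrtr_ge0 ?addr_ge0.
by rewrite /x -!mulrA mulrDl mul1r lerD2l.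
Qed.

End InnerIterations.

Theorem theorem3p5 (R : realType) (C r K : R) :
  0 < C -> 0 <= r < 1 -> 0 < K ->
  exists C' : R, 0 < C' /\
  forall (d N : nat) (f : 'I_N -> 'rV[R]_d -> R) (mu L nu rho gamma : R)
    (solver : 'I_N -> 'rV[R]_d -> 'rV[R]_d -> nat -> 'rV[R]_d)
    (theta : nat -> 'rV[R]_d) (thj zeta : nat -> 'I_N -> 'rV[R]_d)
    (t : nat -> R) (M : nat -> nat),
    (0 < N)%N -> 0 < mu -> 0 < L ->
    (forall j, dfl_convex (f j)) ->
    (forall j, dfl_strongly_convex mu (f j)) ->
    (forall j, dfl_smooth L (f j)) ->
    0 < nu <= mu -> 0 <= rho <= nu / L -> rho <= r -> 0 < gamma ->
    (* local solver with iteration complexity O(sqrt kappa log(1/eps)) *)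
    (forall j (z th0 : 'rV[R]_d) (eps : R), 0 < eps <= 1 ->
       forall k : nat, C * Num.sqrt (L / mu) * (1 + ln (1 / eps)) <= k%:R ->
       (dfl_gap nu (f j) z (solver j z th0 k) <= eps%:E)%E) ->
    dualfl_run f nu rho
      (fun n => N%:R^-1 * ((1 - Num.sqrt rho) / (1 + gamma)) ^+ n)
      solver theta thj zeta t M ->
    forall n : nat,
      (M n)%:R <= C' * Num.sqrt (L / mu) *
                  (1 + ln (N%:R * (1 + gamma) ^+ n) + n%:R * Num.sqrt rho)
      /\
      (forall eps_out : R, 0 < eps_out <= 1 ->
         n%:R * Num.sqrt rho <= K * ln (1 / eps_out) ->
         (M n)%:R <= C' * Num.sqrt (L / mu) *
                     (1 + ln (N%:R * (1 + gamma) ^+ n / eps_out))).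

Proof.
move=> C_gt0 /andP[r_ge0 r_lt1] K_gt0.
have sqrt_r_lt1 : Num.sqrt r < 1 by rewrite -sqrtr1 ltr_sqrt.
set c := (1 - Num.sqrt r)^-1.
have c_gt0 : 0 < c by rewrite invr_gt0 subr_gt0.
exists ((C + 1) * c * (1 + K)); split; first by rewrite !mulr_gt0 ?addr_gt0.
move=> d N f mu L nu rho gamma solver theta thj zeta t M N_gt0 mu_gt0 _ _ f_sc f_smooth
  _ _ rho_le_r gamma_gt0 solver_ok run n.
set s := Num.sqrt (L / mu); set Z := 1 + ln (N%:R * (1 + gamma) ^+ n) + n%:R * Num.sqrt rho.
have sqrt_rho : 0 <= Num.sqrt rho <= Num.sqrt r by rewrite sqrtr_ge0 ler_sqrt.
have sqrt_rho_lt1 : Num.sqrt rho < 1 by rewrite (le_lt_trans _ sqrt_r_lt1) ?ler_sqrt.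
have gamma1_ge1 : 1 <= 1 + gamma by rewrite lerDl ltW.
have C1_ge0 : 0 <= C + 1 by rewrite addr_ge0 // ltW.
have M_le : (M n)%:R <= (C + 1) * c * s * Z.
  have M_le_ln := dualfl_M_le_ln_inv_target N_gt0 mu_gt0 (ltW C_gt0) f_sc f_smooth solver_ok run.
  apply: (le_trans (M_le_ln n _)).
    by rewrite geometric_target_in01 ?sqrtr_ge0.
  rewrite -!mulrA; apply: (ler_wpM2l C1_ge0).
  by rewrite mulrCA; apply: (ler_wpM2l (sqrtr_ge0 _)); exact: ln_inv_geometric_target_le.
have M_le_scaled W : Z <= (1 + K) * W -> (M n)%:R <= (C + 1) * c * (1 + K) * s * W.
  move=> Z_le; apply: (le_trans M_le); rewrite -!mulrA.
  apply: (ler_wpM2l C1_ge0); apply: (ler_wpM2l (ltW c_gt0)).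
  by rewrite mulrCA; apply: (ler_wpM2l (sqrtr_ge0 _)).
have X_ge1 : 1 <= N%:R * (1 + gamma) ^+ n by rewrite mulr_ege1 ?ler1n // exprn_ege1.
split.
  apply/M_le_scaled/ler_peMl; last by rewrite lerDl ltW.
  by rewrite /Z !addr_ge0 ?mulr_ge0 ?sqrtr_ge0 // ln_ge0.
move=> e e01 budget; apply/M_le_scaled/ln_add_le_ln_div => //; exact: ltW.
Qed.
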